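(* Let $P(t)$ be a reciprocal polynomial, written $P(t)=(t-1)^L(t+1)^KP^*(t)$ with $L,K\ge0$ and $P^*(\pm1)\neq0$, and put $\widetilde P(t)=(t-1)^{2\lfloor L/2\rfloor}(t+1)^{2\lfloor K/2\rfloor}P^*(t)$. Then $$Z(\mathfrak I_{P(t)})=\{p(t)e+p(t^{-1})f+q(t)h\in\mathfrak{OA}:\ \widetilde P(t)\mid p(t),\ P(t)\mid q(t)\},$$ divisibility taken in $\mathbb C[t,t^{-1}]$. Consequently $\mathfrak I_{P(t)}$ is closed if and only if $L$ and $K$ are both even.
   Context: Work over $\mathbb C$. $\mathfrak{sl}_2$ has basis $e,f,h$ with $[e,f]=h$, $[h,e]=2e$, $[h,f]=-2f$. $L(\mathfrak{sl}_2)=\mathbb C[t,t^{-1}]\otimes\mathfrak{sl}_2$ is the loop algebra with bracket $[p(t)x,q(t)y]=p(t)q(t)[x,y]$. The Onsager algebra is the Lie subalgebra $\mathfrak{OA}=\{p(t)e+p(t^{-1})f+q(t)h:\ p,q\in\mathbb C[t,t^{-1}],\ q(t^{-1})=-q(t)\}$ of $L(\mathfrak{sl}_2)$. A reciprocal polynomial is a nonconstant monic $P\in\mathbb C[t]$ with $P(t)=\pm t^{\deg P}P(t^{-1})$. For a reciprocal polynomial $P$, $\mathfrak I_{P(t)}=\{p(t)e+p(t^{-1})f+q(t)h\in\mathfrak{OA}:\ p(t),q(t)\in P(t)\mathbb C[t,t^{-1}]\}$; it is an ideal of $\mathfrak{OA}$. For an ideal $I$ of a Lie algebra $\mathfrak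 L$, $Z(I)=\{x\in\mathfrak L:[x,\mathfrak L]\subset I\}$; a nonzero proper ideal $I$ is called closed if $Z(I)=I$. $\lfloor r\rfloor$ is the integer part. *)

From mathcomp Require Import all_boot all_algebra.
From mathcomp Require Import Rstruct complex.
Set Implicit Arguments. Unset Strict Implicit. Unset Printing Implicit Defensive.
Import GRing.Theory.
Local Open Scope ring_scope.

Definition CC : closedFieldType := (Rdefinitions.R)[i].

(* ---------- Laurent polynomials C[t,t^-1] ----------
   A Laurent polynomial is represented by a pair (p, n) standing for
   t^(-n) * p(t); two representatives are identified by [lp_eq]. *)
Definition laurent := ({poly CC} * nat)%type.

Definition lp_eq (x y : laurent) : Prop := x.1 * 'X^(y.2) = y.1 * 'X^(x.2).
Definition lp_poly (p : {poly CC}) : laurent := (p, 0%N).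
Definition lp_add (x y : laurent) : laurent :=
  (x.1 * 'X^(y.2) + y.1 * 'X^(x.2), (x.2 + y.2)%N).
Definition lp_opp (x : laurent) : laurent := (- x.1, x.2).
Definition lp_scale (c : CC) (x : laurent) : laurent := (c *: x.1, x.2).
Definition lp_mul (x y : laurent) : laurent := (x.1 * y.1, (x.2 + y.2)%N).
(* substitution t |-> t^-1 :  t^-n p(t)  |->  t^n p(t^-1)
   = t^-(size p) * (t^n * \sum_j p_(size p - j) t^j) *)
Definition lp_inv (x : laurent) : laurent :=
  ('X^(x.2) * \poly_(j < (size x.1).+1) x.1`_(size x.1 - j), size x.1).
Definition lp_dvd (P : {poly CC}) (x : laurent) : Prop :=
  exists y : laurent, lp_eq x (lp_mul (lp_poly P) y).

(* ---------- the loop algebra L(sl2) ----------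
   an element  a(t) e + b(t) f + c(t) h *)
Record loop := Loop { ce : laurent; cf : laurent; ch : laurent }.

Definition loop_eq (x y : loop) : Prop :=
  lp_eq (ce x) (ce y) /\ lp_eq (cf x) (cf y) /\ lp_eq (ch x) (ch y).
Definition loop0 : loop := Loop (lp_poly 0) (lp_poly 0) (lp_poly 0).
Definition loop_add (x y : loop) : loop :=
  Loop (lp_add (ce x) (ce y)) (lp_add (cf x) (cf y)) (lp_add (ch x) (ch y)).
Definition loop_scale (c : CC) (x : loop) : loop :=
  Loop (lp_scale c (ce x)) (lp_scale c (cf x)) (lp_scale c (ch x)).
(* [p x, q y] = p q [x,y], with [e,f]=h, [h,e]=2e, [h,f]=-2f *)
Definition lp_two (x : laurent) : laurent := lp_scale 2 x.
Definition bracket (x y : loop) : loop :=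
  Loop (lp_add (lp_two (lp_mul (ch x) (ce y))) (lp_opp (lp_two (lp_mul (ce x) (ch y)))))
       (lp_add (lp_two (lp_mul (cf x) (ch y))) (lp_opp (lp_two (lp_mul (ch x) (cf y)))))
       (lp_add (lp_mul (ce x) (cf y)) (lp_opp (lp_mul (cf x) (ce y)))).

Definition inOA (x : loop) : Prop :=
  lp_eq (cf x) (lp_inv (ce x)) /\ lp_eq (lp_inv (ch x)) (lp_opp (ch x)).

Definition reciprocal (P : {poly CC}) : Prop :=
  P \is monic /\ (1 < size P)%N /\
  exists s : CC, (s = 1 \/ s = -1) /\
    lp_eq (lp_poly P)
          (lp_scale s (lp_mul (lp_poly 'X^((size P).-1)) (lp_inv (lp_poly P)))).

Definition IP (P : {poly CC}) (x : loop) : Prop :=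
  inOA x /\ lp_dvd P (ce x) /\ lp_dvd P (ch x).

Definition Zid (I : loop -> Prop) (x : loop) : Prop :=
  inOA x /\ forall y, inOA y -> I (bracket x y).

Definition is_ideal (I : loop -> Prop) : Prop :=
  (forall x, I x -> inOA x) /\
  (forall x y, loop_eq x y -> I x -> I y) /\
  I loop0 /\
  (forall x y, I x -> I y -> I (loop_add x y)) /\
  (forall c x, I x -> I (loop_scale c x)) /\
  (forall x y, I x -> inOA y -> I (bracket x y)).

Definition closed_ideal (I : loop -> Prop) : Prop :=
  is_ideal I /\
  (exists x, I x /\ ~ loop_eq x loop0) /\
  (exists x, inOA x /\ ~ I x) /\
  (forall x, Zid I x <-> I x).

(* Laurent polynomials are embedded in the field of rational functions C(t), where the
   substitution t -> t^-1 and divisibility by a polynomial become explicit.  An element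
   x = p e + p(t^-1) f + q h of the Onsager algebra lies in Z(I_P) iff its brackets with
   e + f and with (t - t^-1) h lie in I_P, which says P | q, P | p(t) - p(t^-1) and
   P | (t^2 - 1) p.  At z = +-1, if (t - z)^M divides p with M odd, write p = (t - z)^M u;
   since t^-1 - z = -z t^-1 (t - z), p(t) - p(t^-1) = (t - z)^M (u(t) + z t^-M u(t^-1)),
   and the cofactor takes the value 2 u(z) at z.  So a root of multiplicity N of P forces
   exactly (t - z)^(2 floor(N/2)) | p, i.e. P~ | p.  Conversely P~(t^-1) = w(t) P~(t) for a
   Laurent polynomial w with w(+-1) = 1, and with q(+-1) = 0 this makes every bracket of
   such an x with the algebra divisible by P~ (t^2 - 1), hence by P. *)

From HB Require Import structures.
From mathcomp Require Import all_boot all_algebra.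
From mathcomp Require Import Rstruct complex fraction ring.
Set Implicit Arguments.
Unset Strict Implicit.
Unset Printing Implicit Defensive.
Import GRing.Theory Num.Theory.
Local Open Scope ring_scope.

Lemma horner_rev_poly (R : fieldType) (q : {poly R}) (z : R) : z != 0 ->
  (\poly_(j < (size q).+1) q`_(size q - j)).[z] = z ^+ size q * q.[z^-1].
Proof.
move=> z0; rewrite horner_poly horner_coef big_ord_recl /= subn0.
rewrite nth_default // mul0r add0r mulr_sumr (reindex_inj rev_ord_inj) /=.
apply: eq_bigr => i _; have lt_i := ltn_ord i.
by rewrite /bump leq0n add1n subnSK // subKn ?(ltnW lt_i) // exprVn mulrCA -expfB // subnSK.
Qed.

Local Notation RF := {fraction {poly CC}}.

Definition cRF : CC -> RF := (@tofrac _) \o polyC.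
HB.instance Definition _ := GRing.RMorphism.copy cRF ((@tofrac _) \o polyC).

Definition tRF : RF := tofrac 'X.

Definition revRF : {poly CC} -> RF := horner_eval tRF^-1 \o map_poly cRF.
HB.instance Definition _ := GRing.RMorphism.on revRF.

Definition lpRF (a : laurent) : RF := tofrac a.1 / tRF ^+ a.2.
Definition lpRFinv (a : laurent) : RF := revRF a.1 * tRF ^+ a.2.

Lemma tRF_neq0 : tRF != 0.
Proof. by rewrite tofrac_eq0 polyX_eq0. Qed.

Lemma tRFX_neq0 n : tRF ^+ n != 0.
Proof. by rewrite expf_neq0 ?tRF_neq0. Qed.

Lemma tofrac_Xn n : tofrac ('X^n : {poly CC}) = tRF ^+ n.
Proof. exact: rmorphXn. Qed.

Lemma tofrac_horner (p : {poly CC}) : tofrac p = (map_poly cRF p).[tRF].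
Proof.
rewrite -{1}[p]coefK poly_def rmorph_sum horner_coef size_map_poly.
by apply: eq_bigr => i _; rewrite coef_map -mul_polyC rmorphM rmorphXn.
Qed.

Lemma lpRF_eq a b : lp_eq a b <-> lpRF a = lpRF b.
Proof.
rewrite /lp_eq /lpRF; split => [eq_ab|/eqP].
  by apply/eqP; rewrite eqr_div ?tRFX_neq0 // -!tofrac_Xn -!rmorphM eq_ab.
by rewrite eqr_div ?tRFX_neq0 // -!tofrac_Xn -!rmorphM tofrac_eq => /eqP.
Qed.

Lemma lpRF_poly p : lpRF (lp_poly p) = tofrac p.
Proof. by rewrite /lpRF expr0 divr1. Qed.

Lemma lpRF_add a b : lpRF (lp_add a b) = lpRF a + lpRF b.
Proof.
by rewrite /lpRF /= rmorphD !rmorphM !rmorphXn exprD addf_div ?tRFX_neq0.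
Qed.

Lemma lpRF_mul a b : lpRF (lp_mul a b) = lpRF a * lpRF b.
Proof. by rewrite /lpRF /= rmorphM exprD mulf_div. Qed.

Lemma lpRF_opp a : lpRF (lp_opp a) = - lpRF a.
Proof. by rewrite /lpRF /= rmorphN mulNr. Qed.

Lemma lpRF_scale c a : lpRF (lp_scale c a) = cRF c * lpRF a.
Proof. by rewrite /lpRF /= -mul_polyC rmorphM mulrA. Qed.

Lemma revRF_X : revRF 'X = tRF^-1.
Proof. by rewrite /revRF /= horner_evalE map_polyX hornerX. Qed.

Lemma revRF_C c : revRF c%:P = cRF c.
Proof. by rewrite /revRF /= horner_evalE map_polyC hornerC. Qed.

Lemma lpRFinv_poly p : lpRFinv (lp_poly p) = revRF p.
Proof. by rewrite /lpRFinv expr0 mulr1. Qed.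

Lemma lpRFinv_add a b : lpRFinv (lp_add a b) = lpRFinv a + lpRFinv b.
Proof.
rewrite /lpRFinv /= rmorphD !rmorphM !rmorphXn /= revRF_X !exprVn.
rewrite addf_div ?tRFX_neq0 // exprD [tRF ^+ a.2 * _]mulrC divfK //.
by rewrite mulf_neq0 ?tRFX_neq0.
Qed.

Lemma lpRFinv_mul a b : lpRFinv (lp_mul a b) = lpRFinv a * lpRFinv b.
Proof. by rewrite /lpRFinv /= rmorphM exprD mulrACA. Qed.

Lemma lpRFinv_opp a : lpRFinv (lp_opp a) = - lpRFinv a.
Proof. by rewrite /lpRFinv /= rmorphN mulNr. Qed.

Lemma lpRFinv_scale c a : lpRFinv (lp_scale c a) = cRF c * lpRFinv a.
Proof. by rewrite /lpRFinv /= -mul_polyC rmorphM /= revRF_C mulrA. Qed.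

Lemma lpRFinv_eq a b : lpRF a = lpRF b -> lpRFinv a = lpRFinv b.
Proof.
move/lpRF_eq/(congr1 revRF); rewrite /lpRFinv !rmorphM !rmorphXn /= revRF_X !exprVn.
move=> eq_ab; apply: (@mulIf _ ((tRF ^+ a.2)^-1 * (tRF ^+ b.2)^-1)).
  by rewrite mulf_neq0 // invr_eq0 tRFX_neq0.
by rewrite !mulrA mulfK ?tRFX_neq0 // mulrAC mulfK ?tRFX_neq0 // eq_ab.
Qed.

Lemma map_rev_poly (p : {poly CC}) :
  map_poly cRF (\poly_(j < (size p).+1) p`_(size p - j)) =
  \poly_(j < (size (map_poly cRF p)).+1) (map_poly cRF p)`_(size (map_poly cRF p) - j).
Proof.
apply/polyP => i; rewrite coef_map !coef_poly size_map_poly.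
case: ifP => _; last exact: rmorph0.
by case: ltnP => lt_p //; rewrite nth_default ?rmorph0.
Qed.

Lemma lpRF_inv a : lpRF (lp_inv a) = lpRFinv a.
Proof.
rewrite /lpRF /lpRFinv /revRF /lp_inv /= horner_evalE rmorphM rmorphXn /= -/tRF.
rewrite tofrac_horner map_rev_poly.
rewrite horner_rev_poly ?tRF_neq0 // size_map_poly mulrA mulrAC mulfK ?tRFX_neq0 //.
by rewrite mulrC.
Qed.

Lemma lpRFinv_inv a : lpRFinv (lp_inv a) = lpRF a.
Proof.
rewrite /lpRF /lpRFinv /revRF /lp_inv /= horner_evalE rmorphM /= map_polyXn hornerM.
rewrite hornerXn map_rev_poly.
rewrite horner_rev_poly ?invr_eq0 ?tRF_neq0 // invrK -tofrac_horner size_map_poly.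
by rewrite !exprVn -mulrA mulrAC mulVf ?tRFX_neq0 // mul1r mulrC.
Qed.

Definition lp_eval (z : CC) (a : laurent) : CC := a.1.[z] / z ^+ a.2.

Lemma lp_eval_eq z a b : z != 0 -> lpRF a = lpRF b -> lp_eval z a = lp_eval z b.
Proof.
move=> z0 /lpRF_eq/(congr1 (horner^~ z))/eqP; rewrite !hornerM !hornerXn => eq_ab.
by apply/eqP; rewrite /lp_eval eqr_div ?expf_neq0.
Qed.

Lemma lp_eval_poly z p : lp_eval z (lp_poly p) = p.[z].
Proof. by rewrite /lp_eval expr0 divr1. Qed.

Lemma lp_eval_add z a b : z != 0 -> lp_eval z (lp_add a b) = lp_eval z a + lp_eval z b.
Proof.
move=> z0; rewrite /lp_eval /= hornerD !hornerM !hornerXn exprD.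
by rewrite addf_div ?expf_neq0.
Qed.

Lemma lp_eval_mul z a b : lp_eval z (lp_mul a b) = lp_eval z a * lp_eval z b.
Proof. by rewrite /lp_eval /= hornerM exprD mulf_div. Qed.

Lemma lp_eval_opp z a : lp_eval z (lp_opp a) = - lp_eval z a.
Proof. by rewrite /lp_eval /= hornerN mulNr. Qed.

Lemma lp_eval_scale z c a : lp_eval z (lp_scale c a) = c * lp_eval z a.
Proof. by rewrite /lp_eval /= hornerZ mulrA. Qed.

Lemma lp_eval_inv z a : z != 0 -> lp_eval z (lp_inv a) = lp_eval z^-1 a.
Proof.
move=> z0; rewrite /lp_eval /lp_inv /= hornerM hornerXn horner_rev_poly //.
by rewrite exprVn invrK mulrA mulrAC mulfK ?expf_neq0 // mulrC.
Qed.

Definition dvdRF (D : {poly CC}) (f : RF) : Prop :=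
  exists b : laurent, f = tofrac D * lpRF b.

Lemma lp_dvdE D a : lp_dvd D a <-> dvdRF D (lpRF a).
Proof.
split=> [[b /lpRF_eq]|[b eq_ab]]; first by rewrite lpRF_mul lpRF_poly; exists b.
by exists b; apply/lpRF_eq; rewrite lpRF_mul lpRF_poly.
Qed.

Lemma dvdRF_lp D a : ~~ root D 0 -> dvdRF D (lpRF a) <-> D %| a.1.
Proof.
move=> nD0; split=> [[b eq_ab]|dvd_a].
  have /lpRF_eq : lpRF a = lpRF (lp_mul (lp_poly D) b) by rewrite lpRF_mul lpRF_poly.
  rewrite /lp_eq /= add0n => eq_ab'.
  have coDX : coprimep D 'X^(b.2).
    by apply: coprimep_expr; have := coprimep_XsubC D 0; rewrite subr0 nD0.
  by rewrite -(Gauss_dvdpl _ coDX) eq_ab' -mulrA dvdp_mulr.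
exists (a.1 %/ D, a.2).
by rewrite /lpRF /= -{1}(divpK dvd_a) rmorphM /= mulrA [_ * tofrac D]mulrC.
Qed.

Lemma lp_dvd_poly D p : ~~ root D 0 -> lp_dvd D (lp_poly p) <-> D %| p.
Proof. by move=> nD0; rewrite lp_dvdE dvdRF_lp. Qed.

Lemma dvdRF_add D f g : dvdRF D f -> dvdRF D g -> dvdRF D (f + g).
Proof. by move=> [b ->] [c ->]; exists (lp_add b c); rewrite lpRF_add mulrDr. Qed.

Lemma dvdRF_opp D f : dvdRF D f -> dvdRF D (- f).
Proof. by move=> [b ->]; exists (lp_opp b); rewrite lpRF_opp mulrN. Qed.

Lemma dvdRF_sub D f g : dvdRF D f -> dvdRF D g -> dvdRF D (f - g).
Proof. by move=> dvd_f /dvdRF_opp; apply: dvdRF_add. Qed.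

Lemma dvdRF_mulr D f b : dvdRF D f -> dvdRF D (f * lpRF b).
Proof. by move=> [c ->]; exists (lp_mul c b); rewrite lpRF_mul [RHS]mulrA. Qed.

Lemma dvdRF_scale D c f : dvdRF D f -> dvdRF D (cRF c * f).
Proof. by move=> [b ->]; exists (lp_scale c b); rewrite lpRF_scale mulrCA. Qed.

Lemma dvdRF_trans D D' f : D' %| D -> dvdRF D f -> dvdRF D' f.
Proof.
move=> /dvdpP [q ->] [b ->]; exists (lp_mul (lp_poly q) b).
by rewrite lpRF_mul lpRF_poly rmorphM [RHS]mulrCA [RHS]mulrA.
Qed.

Lemma dvdRF_mul_coprime D1 D2 a : ~~ root D1 0 -> ~~ root D2 0 -> coprimep D1 D2 ->
  dvdRF D1 (lpRF a) -> dvdRF D2 (lpRF a) -> dvdRF (D1 * D2) (lpRF a).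
Proof.
move=> nD1 nD2 coD; rewrite !dvdRF_lp ?rootM ?negb_or ?nD1 ?nD2 // => dvd1 dvd2.
by rewrite Gauss_dvdp // dvd1 dvd2.
Qed.

Lemma dvdRF_XsubC z a : z != 0 -> dvdRF ('X - z%:P) (lpRF a) <-> lp_eval z a = 0.
Proof.
move=> z0; split=> [[b eq_ab]|eval0].
  have /(lp_eval_eq z0) -> : lpRF a = lpRF (lp_mul (lp_poly ('X - z%:P)) b).
    by rewrite lpRF_mul lpRF_poly.
  by rewrite lp_eval_mul lp_eval_poly hornerXsubC subrr mul0r.
rewrite dvdRF_lp ?root_XsubC 1?eq_sym // dvdp_XsubCl.
by move/eqP: eval0; rewrite mulf_eq0 invr_eq0 expf_eq0 (negbTE z0) andbF orbF.
Qed.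

Lemma inOAE x :
  inOA x <-> lpRF (cf x) = lpRFinv (ce x) /\ lpRFinv (ch x) = - lpRF (ch x).
Proof.
rewrite /inOA -lpRF_inv -lpRF_opp -lpRF_inv.
by split=> [[/lpRF_eq ? /lpRF_eq ?] | [? ?]]; split=> //; apply/lpRF_eq.
Qed.

Lemma lpRFinv_cf x : inOA x -> lpRFinv (cf x) = lpRF (ce x).
Proof. by move=> [/lpRF_eq/lpRFinv_eq -> _]; rewrite lpRFinv_inv. Qed.

Lemma lpRF_bracket_e x y : lpRF (ce (bracket x y)) =
  cRF 2 * (lpRF (ch x) * lpRF (ce y)) - cRF 2 * (lpRF (ce x) * lpRF (ch y)).
Proof. by rewrite /= /lp_two lpRF_add lpRF_opp !lpRF_scale !lpRF_mul. Qed.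

Lemma lpRF_bracket_f x y : lpRF (cf (bracket x y)) =
  cRF 2 * (lpRF (cf x) * lpRF (ch y)) - cRF 2 * (lpRF (ch x) * lpRF (cf y)).
Proof. by rewrite /= /lp_two lpRF_add lpRF_opp !lpRF_scale !lpRF_mul. Qed.

Lemma lpRF_bracket_h x y : lpRF (ch (bracket x y)) =
  lpRF (ce x) * lpRF (cf y) - lpRF (cf x) * lpRF (ce y).
Proof. by rewrite /= lpRF_add lpRF_opp !lpRF_mul. Qed.

Lemma lpRFinv_bracket_e x y : lpRFinv (ce (bracket x y)) =
  cRF 2 * (lpRFinv (ch x) * lpRFinv (ce y)) - cRF 2 * (lpRFinv (ce x) * lpRFinv (ch y)).
Proof. by rewrite /= /lp_two lpRFinv_add lpRFinv_opp !lpRFinv_scale !lpRFinv_mul. Qed.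

Lemma lpRFinv_bracket_h x y : lpRFinv (ch (bracket x y)) =
  lpRFinv (ce x) * lpRFinv (cf y) - lpRFinv (cf x) * lpRFinv (ce y).
Proof. by rewrite /= lpRFinv_add lpRFinv_opp !lpRFinv_mul. Qed.

Lemma inOA_bracket x y : inOA x -> inOA y -> inOA (bracket x y).
Proof.
move=> OAx OAy; have fx := lpRFinv_cf OAx; have fy := lpRFinv_cf OAy.
move/inOAE: OAx => [ex hx]; move/inOAE: OAy => [ey hy].
apply/inOAE; split.
  rewrite lpRF_bracket_f lpRFinv_bracket_e hx hy -ex -ey.
  by rewrite mulNr !mulrN opprK addrC.
by rewrite lpRFinv_bracket_h lpRF_bracket_h fx fy -ex -ey opprB.
Qed.

Lemma inOA0 : inOA loop0.
Proof. by apply/inOAE; rewrite /= lpRF_poly lpRFinv_poly !rmorph0 oppr0. Qed.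

Lemma inOA_add x y : inOA x -> inOA y -> inOA (loop_add x y).
Proof.
move=> /inOAE [ex hx] /inOAE [ey hy].
by apply/inOAE; rewrite /= !lpRF_add !lpRFinv_add ex ey hx hy opprD.
Qed.

Lemma inOA_scale c x : inOA x -> inOA (loop_scale c x).
Proof.
by move=> /inOAE [ex hx]; apply/inOAE; rewrite /= !lpRF_scale !lpRFinv_scale ex hx mulrN.
Qed.

Lemma inOA_loop_eq x y : loop_eq x y -> inOA x -> inOA y.
Proof.
move=> [/lpRF_eq exy [/lpRF_eq fxy /lpRF_eq hxy]] /inOAE [ex hx].
by apply/inOAE; rewrite -fxy -hxy ex -hx; split; apply: lpRFinv_eq.
Qed.

Definition OAe (p : {poly CC}) : loop := Loop (lp_poly p) (lp_inv (lp_poly p)) (lp_poly 0).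

Lemma inOA_OAe p : inOA (OAe p).
Proof. by apply/inOAE; rewrite /= lpRF_inv !lpRF_poly !lpRFinv_poly !rmorph0 oppr0. Qed.

Lemma OAe_eq0 p : loop_eq (OAe p) loop0 -> p = 0.
Proof. by move=> [/lpRF_eq]; rewrite !lpRF_poly rmorph0 => /eqP; rewrite tofrac_eq0 => /eqP. Qed.

Lemma two_neq0 : (2 : CC) != 0.
Proof. by have : (2 : Rdefinitions.R[i]) != 0 by rewrite pnatr_eq0. Qed.

Lemma double_eq0 (e : CC) : e + e = 0 -> e = 0.
Proof.
by rewrite -mulr2n -mulr_natl => /eqP; rewrite mulf_eq0 (negbTE two_neq0) => /eqP.
Qed.

Lemma reciprocal_root0 P : reciprocal P -> ~~ root P 0.
Proof.
move=> [monP [sizeP [s [s_pm1]]]]; rewrite /lp_eq /= add0n.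
move/(congr1 (fun q : {poly CC} => q`_(size P))).
rewrite coefMXn ltnn subnn !expr0 mulr1 mul1r coefZ coefXnM.
have -> : (size P - (size P).-1 = 1)%N by case: (size P) sizeP => // n _; rewrite /= subSnn.
rewrite ltnNge leq_pred /= coef_poly ltnS (ltnW sizeP) subn1 -lead_coefE.
rewrite (monicP monP) mulr1 /root horner_coef0 => ->.
by case: s_pm1 => ->; rewrite ?oppr_eq0 oner_neq0.
Qed.

Lemma reciprocal_lpRFinv P : reciprocal P ->
  exists2 s : CC, s != 0 & tofrac P = cRF s * (tRF ^+ (size P).-1 * lpRFinv (lp_poly P)).
Proof.
move=> [_ [_ [s [s_pm1 /lpRF_eq eqP]]]]; exists s.
  by case: s_pm1 => ->; rewrite ?oppr_eq0 oner_neq0.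
by rewrite lpRF_scale lpRF_mul !lpRF_poly lpRF_inv rmorphXn in eqP.
Qed.

Lemma sqr1_neq0 (R : nzRingType) (z : R) : z * z = 1 -> z != 0.
Proof. by move=> zz; apply: contra_eq_neq zz => ->; rewrite mul0r eq_sym oner_neq0. Qed.

Lemma exp_double_sqr1 (R : nzRingType) (z : R) m : z * z = 1 -> z ^+ m.*2 = 1.
Proof. by move=> zz; rewrite -mul2n exprM expr2 zz expr1n. Qed.

Lemma subVr_sqr1 (K : fieldType) (u c : K) : u != 0 -> c * c = 1 ->
  u^-1 - c = (u - c) * (- c / u).
Proof.
move=> u0 cc; apply/eqP; rewrite -subr_eq0.
have -> : u^-1 - c - (u - c) * (- c / u) = (1 - c * c) / u by field.
by rewrite cc subrr mul0r.
Qed.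

Lemma exp_odd_sqr1 (R : nzRingType) (z : R) m : z * z = 1 -> z ^+ m.*2.+1 = z.
Proof. by move=> zz; rewrite exprS exp_double_sqr1 ?mulr1. Qed.

Lemma revRF_XsubC c : c * c = 1 -> revRF ('X - c%:P) = tofrac ('X - c%:P) * (- cRF c / tRF).
Proof.
move=> cc; rewrite rmorphB /= revRF_X revRF_C rmorphB subVr_sqr1 ?tRF_neq0 //.
by rewrite -rmorphM cc rmorph1.
Qed.

Lemma revRF_XsubCX c n : c * c = 1 ->
  revRF (('X - c%:P) ^+ n) = tofrac (('X - c%:P) ^+ n) * ((- cRF c) ^+ n / tRF ^+ n).
Proof. by move=> cc; rewrite !rmorphXn /= revRF_XsubC // exprMn expr_div_n. Qed.

Definition twisted_reciprocal (D : {poly CC}) : Prop :=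
  exists w : laurent,
    [/\ revRF D = lpRF w * tofrac D, lp_eval 1 w = 1 & lp_eval (-1) w = 1].

Lemma twisted_reciprocal1 : twisted_reciprocal 1.
Proof.
by exists (lp_poly 1); rewrite lpRF_poly !lp_eval_poly !rmorph1 !hornerC mulr1.
Qed.

Lemma twisted_reciprocalM p q :
  twisted_reciprocal p -> twisted_reciprocal q -> twisted_reciprocal (p * q).
Proof.
move=> [v [revp v1 vN1]] [w [revq w1 wN1]]; exists (lp_mul v w).
by rewrite !rmorphM /= revp revq lpRF_mul !lp_eval_mul v1 vN1 w1 wN1 mulrACA mulr1.
Qed.

Lemma twisted_reciprocalX p n : twisted_reciprocal p -> twisted_reciprocal (p ^+ n).
Proof.
move=> twp; elim: n => [|n IHn]; first exact: twisted_reciprocal1.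
by rewrite exprS; apply: twisted_reciprocalM.
Qed.

Lemma twisted_reciprocal_sqr_XsubC z : z * z = 1 -> twisted_reciprocal (('X - z%:P) ^+ 2).
Proof.
move=> zz; exists (1, 2%N); split; last first.
- by rewrite /lp_eval hornerC sqrrN expr1n divr1.
- by rewrite /lp_eval hornerC expr1n divr1.
rewrite /lpRF rmorph1 mul1r rmorphXn /= revRF_XsubC // exprMn expr_div_n sqrrN.
by rewrite [cRF z ^+ 2]expr2 -rmorphM zz rmorph1 div1r mulrC rmorphXn.
Qed.

Lemma twisted_reciprocalP D w : revRF D = lpRF w * tofrac D ->
  ~~ root D 1 -> ~~ root D (-1) -> twisted_reciprocal D.
Proof.
move=> revD nD1 nDN1; exists w.
have evw z : z * z = 1 -> ~~ root D z -> lp_eval z w = 1.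
  move=> zz nDz; have z0 := sqr1_neq0 zz.
  have : lpRF (lp_inv (lp_poly D)) = lpRF (lp_mul w (lp_poly D)).
    by rewrite lpRF_inv lpRFinv_poly lpRF_mul lpRF_poly.
  move/(lp_eval_eq z0); rewrite lp_eval_inv // (mulr1_eq zz) lp_eval_mul !lp_eval_poly.
  by move/(congr1 (fun c => c / D.[z])); rewrite mulfK // divff.
by split=> //; apply: evw; rewrite ?mulrNN ?mulr1.
Qed.

Lemma tofrac_XsubCX_neq0 (z : CC) n : tofrac ('X - z%:P) ^+ n != 0.
Proof. by rewrite expf_neq0 // tofrac_eq0 polyXsubC_eq0. Qed.

Lemma coprimep_XsubC_XaddC (z : CC) : z * z = 1 -> coprimep ('X - z%:P) ('X + z%:P).
Proof.
move=> zz; rewrite -[z in 'X + z%:P]opprK polyCN coprimep_XsubC2 // -opprD oppr_eq0.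
by apply: contraTneq (sqr1_neq0 zz) => /double_eq0 ->; rewrite eqxx.
Qed.

Lemma dvdp_XsubC_odd_succ z m (p : laurent) : z * z = 1 ->
  ('X - z%:P) ^+ m.*2.+1 %| p.1 ->
  dvdRF (('X - z%:P) ^+ m.*2.+2) (lpRF p - lpRFinv p) ->
  ('X - z%:P) ^+ m.*2.+2 %| p.1.
Proof.
move=> zz /dvdpP [u defp] dvd_diff; have z0 := sqr1_neq0 zz.
set T := tofrac ('X - z%:P).
pose v : laurent := (u, p.2).
pose Psi := lp_add v (lp_scale z (lp_mul (1, m.*2.+1) (lp_inv v))).
have diffE : lpRF p - lpRFinv p = T ^+ m.*2.+1 * lpRF Psi.
  have czz : - cRF z * - cRF z = 1 by rewrite mulrNN -rmorphM zz rmorph1.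
  rewrite /Psi lpRF_add lpRF_scale lpRF_mul lpRF_inv /lpRF /lpRFinv /= defp.
  rewrite !rmorphM !rmorphXn /= revRF_XsubC // -/T exprMn expr_div_n (exp_odd_sqr1 _ czz).
  by rewrite rmorph1; ring.
have dvd_Psi : dvdRF ('X - z%:P) (lpRF Psi).
  move: dvd_diff; rewrite diffE => -[b eq_b]; exists b.
  apply: (mulfI (tofrac_XsubCX_neq0 z m.*2.+1)); rewrite -/T eq_b rmorphXn exprS -/T.
  by ring.
have := (dvdRF_XsubC Psi z0).1 dvd_Psi; rewrite /Psi.
rewrite lp_eval_add // lp_eval_scale lp_eval_mul lp_eval_inv // (mulr1_eq zz).
rewrite {2}/lp_eval /= hornerC exp_odd_sqr1 // div1r mulrA mulfV // mul1r.
move/double_eq0/eqP; rewrite mulf_eq0 invr_eq0 expf_eq0 (negbTE z0) andbF orbF => uz0.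
have dvd_u : 'X - z%:P %| u by rewrite dvdp_XsubCl.
by rewrite defp exprS dvdp_mul.
Qed.

Lemma dvdp_XsubC_even_part z N (p : laurent) : z * z = 1 ->
  ('X - z%:P) ^+ N %| p.1 * ('X - z%:P) * ('X + z%:P) ->
  dvdRF (('X - z%:P) ^+ N) (lpRF p - lpRFinv p) ->
  ('X - z%:P) ^+ (N./2.*2) %| p.1.
Proof.
move=> zz; case: N => [|N] dvdN dvd_diff; first by rewrite expr0 dvd1p.
have dvd_p : ('X - z%:P) ^+ N %| p.1.
  have co : coprimep (('X - z%:P) ^+ N) ('X + z%:P).
    by apply: coprimep_expl; apply: coprimep_XsubC_XaddC.
  by move: dvdN; rewrite exprSr mulrAC dvdp_mul2r ?polyXsubC_eq0 // Gauss_dvdpl.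
have [oddN | evenN] := boolP (odd N); last by rewrite odd_halfK /= ?(negbTE evenN).
have defN : N = (N./2).*2.+1 by rewrite -{1}(odd_double_half N) oddN.
rewrite even_halfK /= ?oddN //; rewrite defN in dvd_diff dvd_p *.
exact: dvdp_XsubC_odd_succ.
Qed.

Lemma lp_eval_antisym z (r : laurent) : z * z = 1 -> lpRFinv r = - lpRF r -> lp_eval z r = 0.
Proof.
move=> zz; rewrite -lpRF_inv -lpRF_opp => /(lp_eval_eq (sqr1_neq0 zz)).
rewrite lp_eval_inv ?sqr1_neq0 // (mulr1_eq zz) lp_eval_opp => evE.
by apply: double_eq0; rewrite {1}evE addNr.
Qed.

Lemma dvdRF_XsubC_XaddC1 (a : laurent) : lp_eval 1 a = 0 -> lp_eval (-1) a = 0 ->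
  dvdRF (('X - 1) * ('X + 1)) (lpRF a).
Proof.
move=> ev1 evN1.
have -> : ('X - 1) * ('X + 1) = ('X - 1%:P) * ('X - (-1)%:P) :> {poly CC}.
  by rewrite polyCN polyC1 opprK.
apply: dvdRF_mul_coprime.
- by rewrite root_XsubC eq_sym oner_eq0.
- by rewrite root_XsubC eq_sym oppr_eq0 oner_eq0.
- by rewrite coprimep_XsubC2 // -opprD oppr_eq0 two_neq0.
- by apply/dvdRF_XsubC; rewrite ?oner_eq0.
- by apply/dvdRF_XsubC; rewrite ?oppr_eq0 ?oner_eq0.
Qed.

Section Factorisation.

Variables (P Pstar : {poly CC}) (L K : nat).
Hypothesis defP : P = ('X - 1) ^+ L * ('X + 1) ^+ K * Pstar.
Hypotheses (Pstar1 : ~~ root Pstar 1) (PstarN1 : ~~ root Pstar (-1)).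

Local Notation Pt := (('X - 1) ^+ (2 * L./2) * ('X + 1) ^+ (2 * K./2) * Pstar).

Let XsubC1 : ('X - 1 : {poly CC}) = 'X - 1%:P.
Proof. by rewrite polyC1. Qed.

Let XaddC1 : ('X + 1 : {poly CC}) = 'X - (-1)%:P.
Proof. by rewrite polyCN polyC1 opprK. Qed.

Lemma Pt_dvdp : Pt %| P.
Proof.
have le_half n : (2 * n./2 <= n)%N by rewrite mul2n -[leqRHS]odd_double_half leq_addl.
by rewrite defP !dvdp_mul ?dvdpp ?dvdp_exp2l.
Qed.

Lemma P_dvdp_Pt_mul : P %| Pt * (('X - 1) * ('X + 1)).
Proof.
have le_half n : (n <= (2 * n./2).+1)%N.
  by rewrite mul2n -[leqLHS]odd_double_half addnC -[leqRHS]addn1 leq_add2l leq_b1.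
have -> : Pt * (('X - 1) * ('X + 1)) =
    ('X - 1) ^+ (2 * L./2).+1 * ('X + 1) ^+ (2 * K./2).+1 * Pstar.
  by rewrite !exprSr; ring.
by rewrite defP !dvdp_mul ?dvdpp ?dvdp_exp2l.
Qed.

Lemma Pt_ndvdp : odd L || odd K -> ~~ (P %| Pt).
Proof.
move=> oddLK; have Pstar0 : Pstar != 0 by apply: contraNneq Pstar1 => ->; rewrite root0.
have Pt0 : Pt != 0 by rewrite !mulf_neq0 // expf_neq0 // ?XsubC1 ?XaddC1 polyXsubC_eq0.
have -> : P = Pt * (('X - 1) ^+ odd L * ('X + 1) ^+ odd K).
  rewrite defP -{1}[L]odd_double_half -{1}[K]odd_double_half -!mul2n.
  rewrite [_ ^+ (odd L + _)]exprD [_ ^+ (odd K + _)]exprD.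
  move: (('X - 1) ^+ odd L) (('X + 1) ^+ odd K) => a b.
  move: (('X - 1) ^+ (2 * L./2)) (('X + 1) ^+ (2 * K./2)) => c d.
  by ring.
rewrite -{2}[Pt]mulr1 dvdp_mul2l //; apply/negP => dvd1.
suff [z dvd_z] : exists z : CC, 'X - z%:P %| 1.
  by move: dvd_z; rewrite dvdp_XsubCl /root hornerC oner_eq0.
case/orP: oddLK => odd_LK; [exists 1 | exists (-1)]; apply: dvdp_trans dvd1.
  by rewrite -XsubC1 odd_LK expr1 dvdp_mulr.
by rewrite -XaddC1 odd_LK expr1 dvdp_mull.
Qed.

Lemma twisted_reciprocal_Pstar : reciprocal P -> twisted_reciprocal Pstar.
Proof.
move=> recP; have [s s0 eqP] := reciprocal_lpRFinv recP.
pose A : {poly CC} := ('X - 1) ^+ L * ('X + 1) ^+ K.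
have A0 : tofrac A != 0.
  by rewrite tofrac_eq0 mulf_neq0 // expf_neq0 // ?XsubC1 ?XaddC1 polyXsubC_eq0.
pose k := cRF ((-1) ^+ L) / tRF ^+ (L + K).
have revA : revRF A = tofrac A * k.
  rewrite /A /k XsubC1 XaddC1 rmorphM [tofrac _]rmorphM /=.
  rewrite !revRF_XsubCX ?mulrNN ?mulr1 // !rmorphN !rmorph1 !opprK expr1n exprD invfM.
  rewrite [cRF _]rmorphXn rmorphN1.
  by ring.
pose c := cRF s * tRF ^+ (size P).-1 * k.
have c0 : c != 0.
  apply: mulf_neq0; first by apply: mulf_neq0; rewrite ?fmorph_eq0 ?tRFX_neq0.
  apply: mulf_neq0; last by rewrite invr_eq0 tRFX_neq0.
  by rewrite fmorph_eq0 expf_neq0 // oppr_eq0 oner_neq0.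
have {eqP} revPstar : revRF Pstar = c^-1 * tofrac Pstar.
  have defPA : P = A * Pstar by rewrite defP.
  have : tofrac A * tofrac Pstar = tofrac A * (c * revRF Pstar).
    move: eqP; rewrite lpRFinv_poly [X in tofrac X]defPA [X in revRF X]defPA.
    by rewrite !(rmorphM _ A Pstar) /= revA => ->; rewrite /c; ring.
  by move/(mulfI A0) ->; rewrite mulKf.
apply: (@twisted_reciprocalP _ (((s * (-1) ^+ L)^-1) *: 'X^(L + K), (size P).-1)) => //.
rewrite revPstar; congr (_ * _).
rewrite /lpRF /= -mul_polyC rmorphM rmorphXn /= -/tRF -[tofrac _%:P]/(cRF _).
by rewrite fmorphV rmorphM /c /k !invfM invrK; ring.
Qed.

Lemma twisted_reciprocal_Pt : reciprocal P -> twisted_reciprocal Pt.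
Proof.
move=> recP; apply: twisted_reciprocalM; last exact: twisted_reciprocal_Pstar.
have tw1 : twisted_reciprocal (('X - 1) ^+ 2).
  by have := @twisted_reciprocal_sqr_XsubC 1; rewrite polyC1 mulr1; apply.
have twN1 : twisted_reciprocal (('X + 1) ^+ 2).
  by have := @twisted_reciprocal_sqr_XsubC (-1); rewrite polyCN polyC1 opprK mulrNN mulr1; apply.
by rewrite !exprM; apply: twisted_reciprocalM; apply: twisted_reciprocalX.
Qed.

Lemma Pt_dvdp_of (p : laurent) : P %| p.1 * ('X - 1) * ('X + 1) ->
  dvdRF P (lpRF p - lpRFinv p) -> Pt %| p.1.
Proof.
move=> dvdP dvd_diff.
have coPstar1 : coprimep Pstar ('X - 1) by rewrite XsubC1 coprimep_XsubC.
have coPstarN1 : coprimep Pstar ('X + 1) by rewrite XaddC1 coprimep_XsubC.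
have dvd_Pstar : Pstar %| p.1.
  have : Pstar %| p.1 * ('X - 1) * ('X + 1) by apply: dvdp_trans dvdP; rewrite defP dvdp_mull.
  by rewrite !Gauss_dvdpl.
have dvd_L : ('X - 1) ^+ (2 * L./2) %| p.1.
  have := @dvdp_XsubC_even_part 1 L p; rewrite polyC1 mul2n mulr1; apply=> //.
    by apply: dvdp_trans dvdP; rewrite defP -mulrA dvdp_mulr.
  by apply: dvdRF_trans dvd_diff; rewrite defP -mulrA dvdp_mulr.
have dvd_K : ('X + 1) ^+ (2 * K./2) %| p.1.
  have := @dvdp_XsubC_even_part (-1) K p.
  rewrite polyCN polyC1 opprK mul2n mulrNN mulr1 mulrAC; apply=> //.
    by apply: dvdp_trans dvdP; rewrite defP mulrAC dvdp_mull ?dvdpp.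
  by apply: dvdRF_trans dvd_diff; rewrite defP mulrAC dvdp_mull ?dvdpp.
rewrite Gauss_dvdp; last by rewrite coprimep_sym coprimepMr !coprimep_expr.
rewrite dvd_Pstar andbT Gauss_dvdp ?dvd_L ?dvd_K //.
rewrite coprimep_expl // coprimep_expr // XsubC1 XaddC1 coprimep_XsubC2 //.
by rewrite -opprD oppr_eq0 two_neq0.
Qed.


Lemma nroot0_Pt : reciprocal P -> ~~ root Pt 0.
Proof.
move=> /reciprocal_root0; apply: contra; rewrite -!dvdp_XsubCl => dvdPt.
exact: dvdp_trans dvdPt Pt_dvdp.
Qed.

Lemma inOA_tsubV_h : inOA (Loop (lp_poly 0) (lp_poly 0) (('X - 1) * ('X + 1), 1%N)).
Proof.
apply/inOAE; rewrite /= lpRF_poly lpRFinv_poly !rmorph0; split=> //.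
rewrite /lpRF /lpRFinv /= !rmorphM /= XsubC1 XaddC1 !revRF_XsubC ?mulrNN ?mulr1 //.
rewrite !rmorphN !rmorph1 !opprK expr1 mulN1r div1r mulrN !mulNr; congr (- _).
by rewrite mulrA mulfVK ?tRF_neq0 // mulrAC.
Qed.

Lemma Zid_IP_dvd x : reciprocal P -> Zid (IP P) x -> lp_dvd Pt (ce x) /\ lp_dvd P (ch x).
Proof.
move=> recP [OAx Zx]; have [ex _] := (inOAE x).1 OAx.
have [_ [dvd_e dvd_h]] := Zx _ (inOA_OAe 1).
move/lp_dvdE: dvd_e; rewrite lpRF_bracket_e /= !lpRF_poly rmorph1 rmorph0 mulr1 !mulr0 subr0.
move/(dvdRF_scale 2^-1); rewrite mulrA -rmorphM mulVf ?two_neq0 // rmorph1 mul1r => dvd_ch.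
move/lp_dvdE: dvd_h; rewrite lpRF_bracket_h /= lpRF_inv lpRFinv_poly lpRF_poly !rmorph1.
rewrite !mulr1 ex => dvd_diff.
have [_ [dvd_e' _]] := Zx _ inOA_tsubV_h.
move/lp_dvdE: dvd_e'; rewrite lpRF_bracket_e /= lpRF_poly rmorph0 !mulr0 sub0r.
move/(dvdRF_scale (- 2^-1))/(dvdRF_mulr (lp_poly 'X)).
have -> : cRF (- 2^-1) * - (cRF 2 * (lpRF (ce x) * lpRF (('X - 1) * ('X + 1), 1%N))) *
    lpRF (lp_poly 'X) = lpRF (lp_mul (ce x) (lp_poly (('X - 1) * ('X + 1)))).
  rewrite lpRF_mul !lpRF_poly {2}/lpRF /= expr1 rmorphN fmorphV mulrNN.
  by rewrite mulKf ?fmorph_eq0 ?two_neq0 // -mulrA mulfVK ?tRF_neq0.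
rewrite dvdRF_lp ?reciprocal_root0 //= mulrA => dvdP.
split; apply/lp_dvdE => //.
by rewrite dvdRF_lp ?nroot0_Pt //; apply: Pt_dvdp_of.
Qed.

Lemma dvd_Zid_IP x : reciprocal P ->
  inOA x -> lp_dvd Pt (ce x) -> lp_dvd P (ch x) -> Zid (IP P) x.
Proof.
move=> recP OAx /lp_dvdE [b ceE] /lp_dvdE dvd_chx; split=> // y OAy.
split; first exact: inOA_bracket.
have [ex _] := (inOAE x).1 OAx; have [ey chy] := (inOAE y).1 OAy.
have dvd_chy : dvdRF (('X - 1) * ('X + 1)) (lpRF (ch y)).
  by apply: dvdRF_XsubC_XaddC1; apply: (lp_eval_antisym _ chy); rewrite ?mulrNN mulr1.
split; apply/lp_dvdE.
  rewrite lpRF_bracket_e; apply: dvdRF_sub; apply: dvdRF_scale; first exact: dvdRF_mulr.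
  have [c ->] := dvd_chy; rewrite ceE; apply: dvdRF_trans P_dvdp_Pt_mul _.
  by exists (lp_mul b c); rewrite lpRF_mul rmorphM; ring.
have [w [revPt w1 wN1]] := twisted_reciprocal_Pt recP.
have ceE' : lpRFinv (ce x) = lpRF w * tofrac Pt * lpRFinv b.
  have : lpRF (ce x) = lpRF (lp_mul (lp_poly Pt) b) by rewrite lpRF_mul lpRF_poly.
  by move/lpRFinv_eq ->; rewrite lpRFinv_mul lpRFinv_poly revPt.
pose Phi := lp_add (lp_mul b (lp_inv (ce y))) (lp_opp (lp_mul w (lp_mul (lp_inv b) (ce y)))).
have PhiE : lpRF (ce x) * lpRFinv (ce y) - lpRFinv (ce x) * lpRF (ce y) = tofrac Pt * lpRF Phi.
  by rewrite ceE ceE' /Phi lpRF_add lpRF_opp !lpRF_mul !lpRF_inv; ring.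
have Phi_pm1 z : z * z = 1 -> lp_eval z w = 1 -> lp_eval z Phi = 0.
  move=> zz wz; have z0 := sqr1_neq0 zz.
  rewrite /Phi lp_eval_add // lp_eval_opp !lp_eval_mul !lp_eval_inv // (mulr1_eq zz).
  by rewrite wz mul1r mulrCA subrr.
rewrite lpRF_bracket_h ex ey PhiE.
have N1N1 : (-1 : CC) * -1 = 1 by rewrite mulrNN mulr1.
have [c ->] := dvdRF_XsubC_XaddC1 (Phi_pm1 1 (mulr1 1) w1) (Phi_pm1 (-1) N1N1 wN1).
apply: dvdRF_trans P_dvdp_Pt_mul _; exists c.
by rewrite (rmorphM _ Pt) mulrA.
Qed.

Lemma IP_OAe p : reciprocal P -> IP P (OAe p) <-> P %| p.
Proof.
move=> /reciprocal_root0 nP0; rewrite /IP /= -lp_dvd_poly //.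
by split=> [[_ []] | dvd_p] //; split; [exact: inOA_OAe | split; rewrite // lp_dvd_poly ?dvdp0].
Qed.

Lemma Zid_IP_OAe p : reciprocal P -> Zid (IP P) (OAe p) <-> Pt %| p.
Proof.
move=> recP; rewrite -lp_dvd_poly ?nroot0_Pt //; split; first by case/(Zid_IP_dvd recP).
move=> dvd_p; apply: dvd_Zid_IP => //; first exact: inOA_OAe.
by rewrite lp_dvd_poly ?dvdp0 ?reciprocal_root0.
Qed.

Lemma IP_Zid x : reciprocal P -> IP P x -> Zid (IP P) x.
Proof.
move=> recP [OAx [/lp_dvdE dvd_e dvd_h]]; apply: dvd_Zid_IP => //.
exact/lp_dvdE/(dvdRF_trans Pt_dvdp).
Qed.

Lemma IP_is_ideal : reciprocal P -> is_ideal (IP P).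
Proof.
move=> recP; have nP0 := reciprocal_root0 recP.
split; first by move=> x [].
split.
  move=> x y eq_xy [OAx [dvd_e dvd_h]].
  split; first exact: inOA_loop_eq eq_xy OAx.
  have [/lpRF_eq exy [_ /lpRF_eq hxy]] := eq_xy.
  by split; apply/lp_dvdE; rewrite -?exy -?hxy; apply/lp_dvdE.
split; first by split; [exact: inOA0 | split; rewrite lp_dvd_poly ?dvdp0].
split.
  move=> x y [OAx [/lp_dvdE ex /lp_dvdE hx]] [OAy [/lp_dvdE ey /lp_dvdE hy]].
  split; first exact: inOA_add.
  by split; apply/lp_dvdE; rewrite lpRF_add; apply: dvdRF_add.
split.
  move=> c x [OAx [/lp_dvdE ex /lp_dvdE hx]].
  split; first exact: inOA_scale.
  by split; apply/lp_dvdE; rewrite lpRF_scale; apply: dvdRF_scale.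
by move=> x y /(IP_Zid recP) [_]; apply.
Qed.

End Factorisation.

Theorem lemma2 (P Pstar : {poly CC}) (L K : nat) :
  reciprocal P ->
  P = ('X - 1) ^+ L * ('X + 1) ^+ K * Pstar ->
  ~~ root Pstar 1 -> ~~ root Pstar (-1) ->
  let Pt := ('X - 1) ^+ (2 * L./2) * ('X + 1) ^+ (2 * K./2) * Pstar in
  (forall x : loop,
     Zid (IP P) x <-> (inOA x /\ lp_dvd Pt (ce x) /\ lp_dvd P (ch x))) /\
  (closed_ideal (IP P) <-> (~~ odd L /\ ~~ odd K)).
Proof.
move=> recP defP Pstar1 PstarN1 Pt.
have ZE x : Zid (IP P) x <-> inOA x /\ lp_dvd Pt (ce x) /\ lp_dvd P (ch x).
  split=> [Zx | [OAx [dvd_e dvd_h]]]; last exact: (dvd_Zid_IP defP).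
  by split; [case: Zx | exact: (Zid_IP_dvd defP)].
split=> //; split=> [[_ [_ [_ ZIP]]] | [evenL evenK]].
  apply/andP; rewrite -negb_or; apply/negP => oddLK.
  have /ZIP/(IP_OAe _ recP) : Zid (IP P) (OAe Pt).
    exact/(Zid_IP_OAe defP Pstar1 PstarN1 _ recP).
  exact/negP/(Pt_ndvdp defP Pstar1).
have PtP : Pt = P by rewrite /Pt defP !mul2n !even_halfK.
split; first exact: (IP_is_ideal defP).
have [_ [sizeP _]] := recP.
split.
  exists (OAe P); split; first exact/(IP_OAe P recP).
  by move/OAe_eq0/eqP; rewrite -size_poly_eq0 gtn_eqF // ltnW.
split.
  exists (OAe 1); split; first exact: inOA_OAe.
  by move/(IP_OAe 1 recP); rewrite dvdp1 gtn_eqF.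
by move=> x; rewrite ZE PtP.
Qed.
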